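(* Fix $N\ge1$. For any $T\ge1$, any $\varkappa\in\mathbb{P}'_T$ with $\varkappa_T>N$, and any $M\ge N$, $$\mathscr{D}_N\widetilde{\mathsf{F}}^{(M)}_\varkappa(u_1,\ldots,u_T\mid\mathbf{a},\boldsymbol\nu)=q^T(1-\nu_1\cdots\nu_N)\,\widetilde{\mathsf{F}}^{(M)}_\varkappa(u_1,\ldots,u_T\mid\mathbf{a},\boldsymbol\nu).$$ Moreover, for any $\ell\ge1$ and $N_1\ge\ldots\ge N_\ell\ge1$ with $N_1\le N$, $$\mathscr{D}_{N_\ell}\cdots\mathscr{D}_{N_1}\widetilde{\mathsf{F}}^{(M)}_\varkappa(u_1,\ldots,u_T\mid\mathbf{a},\boldsymbol\nu)=q^{\ell T}\,\widetilde{\mathsf{F}}^{(M)}_\varkappa(u_1,\ldots,u_T\mid\mathbf{a},\boldsymbol\nu)\cdot\bigl(\mathscr{D}_{N_\ell}\cdots\mathscr{D}_{N_1}1\bigr).$$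
   Context: Fix $q\in(0,1)$; $(z;q)_k=\prod_{i=0}^{k-1}(1-zq^i)$. Parameters: $u_1,u_2,\ldots\in(-\infty,0)$, $a_1,a_2,\ldots\in(0,\infty)$, $\nu_1,\nu_2,\ldots\in(0,1)$ with $a_i,\nu_i$ uniformly bounded away from the endpoints of their intervals, and with $a_i\mathsf{c}_j<1$ for all $i,j$, where $\mathsf{c}_j:=\nu_j/a_j$. $\mathbb{P}'_T$ is the set of integer partitions $\varkappa=(\varkappa_1\ge\ldots\ge\varkappa_T\ge1)$ with exactly $T$ positive parts; write $k_r:=\#\{i:\varkappa_i=r\}$. Define $$\mathsf{F}^{\mathrm{stoch}}_\varkappa(u_1,\ldots,u_T\mid\mathbf{a},\boldsymbol\nu):=\prod_{r\ge1}\frac{(\nu_r;q)_{k_r}}{(q;q)_{k_r}}\sum_{\sigma\in S_T}\sigma\Bigl(\prod_{1\le\alpha<\beta\le T}\frac{u_\alpha-qu_\beta}{u_\alpha-u_\beta}\prod_{i=1}^T\frac{1-q}{1-a_{\varkappa_i}u_i}\prod_{j=1}^{\varkappa_i-1}\frac{\nu_j-a_ju_i}{1-a_ju_i}\Bigr),$$ where $\sigma$ acts by permuting the variables $u_1,\ldots,u_T$ (not the $\varkappa_i$). Set $\Phi_M(u_1,\ldots,u_T):=\prod_{i=1}^T\prod_{j=1}^M(1-a_ju_i)$ and $\widetilde{\mathsf{F}}^{(M)}_\varkappa:=\Phi_M\,\mathsf{F}^{\mathrm{stoch}}_\varkappa$. $\mathscr{T}_{q;x}$ is the $q$-shift $x\mapsto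 qx$ in the variable $x$, and the operator $\mathscr{D}_N$ acts on functions of the $a_i$'s and $\nu_i$'s by $\mathscr{D}_N=\sum_{r=1}^N(1-\nu_r)\bigl(\prod_{1\le i\le N,\,i\ne r}\frac{a_i-\nu_ia_r}{a_i-a_r}\bigr)\mathscr{T}_{q;a_r}\mathscr{T}_{q;\nu_r}$; products of operators mean composition (rightmost first). *)

(* All sequences (u_i), (a_i), (nu_i), (kappa_i) are
   1-indexed functions on nat; index 0 is unused. *)
From HB Require Import structures.
From mathcomp Require Import all_boot all_order all_algebra all_fingroup.
Set Implicit Arguments.
Unset Strict Implicit.
Unset Printing Implicit Defensive.
Import Order.TTheory GRing.Theory Num.Theory.
Local Open Scope ring_scope.

Section Defs.
Variable R : realFieldType.
Variable q : R.

Definition qpoch (z : R) (k : nat) : R := \prod_(i < k) (1 - z * q ^+ i).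

Definition partitionT (T : nat) (kappa : nat -> nat) : Prop :=
  (forall i, (1 <= i)%N -> (i < T)%N -> (kappa i.+1 <= kappa i)%N) /\
  (1 <= kappa T)%N.

Definition mult (T : nat) (kappa : nat -> nat) (r : nat) : nat :=
  #|[set i : 'I_T | kappa i.+1 == r]|.

Definition Fstoch (T : nat) (kappa : nat -> nat) (u : nat -> R)
    (a nu : nat -> R) : R :=
  (\prod_(1 <= r < (\max_(i < T) kappa i.+1).+1)
      (qpoch (nu r) (mult T kappa r) / qpoch q (mult T kappa r))) *
  \sum_(s : 'S_T)
    let v := fun i : 'I_T => u (s i).+1 in
    (\prod_(al < T) \prod_(be < T | (al < be)%N)
        ((v al - q * v be) / (v al - v be))) *
    \prod_(i < T)
      ((1 - q) / (1 - a (kappa i.+1) * v i) *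
       \prod_(1 <= j < kappa i.+1) ((nu j - a j * v i) / (1 - a j * v i))).

Definition PhiM (M T : nat) (u a : nat -> R) : R :=
  \prod_(1 <= i < T.+1) \prod_(1 <= j < M.+1) (1 - a j * u i).

Definition Ftilde (M T : nat) (kappa : nat -> nat) (u : nat -> R)
    : (nat -> R) -> (nat -> R) -> R :=
  fun a nu => PhiM M T u a * Fstoch T kappa u a nu.

Definition qshift (r : nat) (a : nat -> R) : nat -> R :=
  fun i => if i == r then q * a i else a i.

Definition Dop (N : nat) (f : (nat -> R) -> (nat -> R) -> R)
    : (nat -> R) -> (nat -> R) -> R :=
  fun a nu =>
    \sum_(1 <= r < N.+1)
      (1 - nu r) *
      (\prod_(1 <= i < N.+1 | i != r) ((a i - nu i * a r) / (a i - a r))) *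
      f (qshift r a) (qshift r nu).

(* D_{N_l} ... D_{N_1} f  for Ns = [:: N_1; ...; N_l] (rightmost first) *)
Definition Diter (Ns : seq nat) (f : (nat -> R) -> (nat -> R) -> R)
    : (nat -> R) -> (nat -> R) -> R :=
  foldl (fun g n => Dop n g) f Ns.

End Defs.

(** The q-shift of [a_r], [nu_r] with [r <= N] multiplies [Phi_M] by
    [prod_i (1 - q a_r u_i) / (1 - a_r u_i)] and, since every part of [kappa]
    exceeds [N], touches in [F^stoch] only the factors
    [(nu_r - a_r u_i) / (1 - a_r u_i)] (each picks up [q] and the inverse ratio)
    and not the [q]-Pochhammer prefactor ([k_r = 0]).  Hence [F~] is an
    eigenfunction with eigenvalue [q^T] of every shift occurring in [D_N],
    which gives [D_{N_l} ... D_{N_1} F~ = q^(l T) F~ (D_{N_l} ... D_{N_1} 1)].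
    Finally [D_N 1 = 1 - nu_1 ... nu_N] is the value at [z = 0] of the partial
    fraction expansion of [prod_i (a_i - nu_i z) / (a_i - z)]. *)

From HB Require Import structures.
From mathcomp Require Import all_boot all_order all_algebra all_fingroup.
From mathcomp Require Import ring zify.
Import Order.TTheory GRing.Theory Num.Theory.
Set Implicit Arguments.
Unset Strict Implicit.
Unset Printing Implicit Defensive.
Local Open Scope ring_scope.

Section PartialFractions.
Variable R : fieldType.

Lemma prodr_nat_update m n r t (F G : nat -> R) :
  (m <= r < n)%N -> (forall j, j != r -> G j = F j) -> G r = F r * t ->
  \prod_(m <= j < n) G j = (\prod_(m <= j < n) F j) * t.
Proof.
move=> hr hG hGr; have hin : r \in index_iota m n by rewrite mem_index_iota.
rewrite (bigD1_seq r) ?iota_uniq // [in RHS](bigD1_seq r) ?iota_uniq //.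
rewrite hGr (eq_bigr F) => [|j /hG //]; exact: mulrAC.
Qed.

Definition Dcoef N (a nu : nat -> R) r :=
  \prod_(1 <= i < N.+1 | i != r) ((a i - nu i * a r) / (a i - a r)).

Lemma Dcoef_recr N a nu r : (r <= N)%N ->
  Dcoef N.+1 a nu r = Dcoef N a nu r * ((a N.+1 - nu N.+1 * a r) / (a N.+1 - a r)).
Proof.
move=> hr; rewrite /Dcoef big_mkcond big_nat_recr //= [in RHS]big_mkcond.
by rewrite ifT // neq_ltn ltnS hr orbT.
Qed.

Lemma Dcoef_last N a nu : Dcoef N.+1 a nu N.+1 =
  \prod_(1 <= i < N.+1) ((a i - nu i * a N.+1) / (a i - a N.+1)).
Proof.
rewrite /Dcoef big_mkcond big_nat_recr //= eqxx mulr1.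
by apply: eq_big_nat => i /andP[_ hi]; rewrite ifT // neq_ltn hi.
Qed.

Lemma prod_ratio_partial_fractions N (a nu : nat -> R) z :
  {in [pred i | 1 <= i <= N]%N &, injective a} ->
  (forall i, (1 <= i <= N)%N -> a i != z) ->
  \prod_(1 <= i < N.+1) ((a i - nu i * z) / (a i - z)) =
  \prod_(1 <= i < N.+1) nu i +
  \sum_(1 <= r < N.+1) (1 - nu r) * a r * Dcoef N a nu r / (a r - z).
Proof.
elim: N z => [|N IH] z ainj haz; first by rewrite !big_geq // addr0.
have ainjN : {in [pred i | 1 <= i <= N]%N &, injective a}.
  by move=> i j /andP[? ?] /andP[? ?]; apply: ainj; rewrite inE; lia.
have hazN i : (1 <= i <= N)%N -> a i != z by move=> ?; apply: haz; lia.
have hbz : a N.+1 - z != 0 by rewrite subr_eq0 haz // leqnn.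
have ha_last i : (1 <= i <= N)%N -> a i != a N.+1.
  by move=> hi; apply/eqP => /ainj; rewrite !inE; lia.
pose S z' := \sum_(1 <= r < N.+1) (1 - nu r) * a r * Dcoef N a nu r / (a r - z').
have sum_succ :
    \sum_(1 <= r < N.+2) (1 - nu r) * a r * Dcoef N.+1 a nu r / (a r - z) =
    \sum_(1 <= r < N.+1) (1 - nu r) * a r * Dcoef N a nu r / (a r - z)
       * ((a N.+1 - nu N.+1 * a r) / (a N.+1 - a r)) +
    (1 - nu N.+1) * a N.+1 * (\prod_(1 <= i < N.+1) nu i + S (a N.+1))
       / (a N.+1 - z).
  rewrite big_nat_recr //= Dcoef_last (IH _ ainjN) //.
  congr (_ + _); apply: eq_big_nat => r /andP[_ hr].
  by rewrite Dcoef_recr -1?ltnS //; ring.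
(* Splitting off the pole at [a N.+1] from each term of [S z]. *)
have S_split : S z * ((a N.+1 - nu N.+1 * z) / (a N.+1 - z)) =
  \sum_(1 <= r < N.+1) (1 - nu r) * a r * Dcoef N a nu r / (a r - z)
     * ((a N.+1 - nu N.+1 * a r) / (a N.+1 - a r)) +
  (1 - nu N.+1) * a N.+1 / (a N.+1 - z) * S (a N.+1).
  rewrite /S mulr_suml mulr_sumr -big_split /=.
  apply: eq_big_nat => r /andP[hr1 hr2].
  have har : a r - z != 0 by rewrite subr_eq0 hazN //; lia.
  have hbr : a N.+1 - a r != 0 by rewrite subr_eq0 eq_sym ha_last //; lia.
  have hrb : a r - a N.+1 != 0 by rewrite -opprB oppr_eq0.
  by field; rewrite hbz har hbr hrb.
rewrite big_nat_recr // (IH _ ainjN hazN).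
rewrite [\prod_(1 <= i < N.+2) nu i]big_nat_recr //= sum_succ -/(S z) mulrDl S_split.
by field.
Qed.
End PartialFractions.

Section Doperator.
Variables (R : realFieldType) (q : R).

Lemma qshift_at r (a : nat -> R) : qshift q r a r = q * a r.
Proof. by rewrite /qshift eqxx. Qed.

Lemma qshift_ne r (a : nat -> R) j : j != r -> qshift q r a j = a j.
Proof. by rewrite /qshift => /negbTE ->. Qed.

Lemma Dop_const1 N (a nu : nat -> R) :
  {in [pred i | 1 <= i <= N]%N &, injective a} ->
  (forall i, (1 <= i <= N)%N -> a i != 0) ->
  Dop q N (fun _ _ => 1) a nu = 1 - \prod_(1 <= r < N.+1) nu r.
Proof.
move=> ainj ha0.
have := prod_ratio_partial_fractions nu ainj ha0.
rewrite big_nat big1 => [pf|i /ha0 hai]; last by rewrite mulr0 !subr0 divff.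
rewrite {1}[in RHS]pf addrC addKr /Dop; apply: eq_big_nat => r hr.
by rewrite subr0 mulr1 mulrAC mulfK ?ha0.
Qed.

Lemma Diter_qshift_eigen c N (P : (nat -> R) -> (nat -> R) -> Prop)
    (f : (nat -> R) -> (nat -> R) -> R) :
  (forall r a nu, (1 <= r <= N)%N -> P a nu -> P (qshift q r a) (qshift q r nu)) ->
  (forall r a nu, (1 <= r <= N)%N -> P a nu ->
     f (qshift q r a) (qshift q r nu) = c * f a nu) ->
  forall Ns, all (fun n => n <= N)%N Ns -> forall a nu, P a nu ->
  Diter q Ns f a nu = c ^+ size Ns * f a nu * Diter q Ns (fun _ _ => 1) a nu.
Proof.
move=> hP hf; elim/last_ind => [|Ns n IH].
  by move=> *; rewrite expr0 mul1r mulr1.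
rewrite all_rcons => /andP[hn hNs] a nu Pa.
rewrite /Diter !foldl_rcons -!/(Diter q Ns _) /Dop size_rcons exprS mulr_sumr.
apply: eq_big_nat => r hr; have hrN : (1 <= r <= N)%N by lia.
have Psh := hP r a nu hrN Pa.
by rewrite IH // hf //; ring.
Qed.
End Doperator.

Lemma partitionT_ge_last T kappa : partitionT T kappa ->
  forall i, (1 <= i <= T)%N -> (kappa T <= kappa i)%N.
Proof.
case=> hmono _ i hi.
have : {in [pred i | 1 <= i <= T]%N &, {homo kappa : i j / (i <= j)%N >-> (j <= i)%N}}.
  apply: homo_leq_in => [//|y x z h1 h2|i' j'|i'].
  - exact: leq_trans h2 h1.
  - rewrite !inE => ? ? k; rewrite inE; lia.
  - rewrite !inE => ? ?; apply: hmono; lia.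
apply; rewrite ?inE //; lia.
Qed.

Lemma mult_eq0 T kappa r : (forall i, (i < T)%N -> kappa i.+1 != r) ->
  mult T kappa r = 0%N.
Proof.
move=> hk; apply/eqP; rewrite cards_eq0; apply/eqP/setP => i.
by rewrite !inE; apply/negbTE/hk.
Qed.

Section FtildeQshift.
Variables (R : realFieldType) (q : R).

Lemma PhiM_qshift M T (u a : nat -> R) r : (1 <= r <= M)%N ->
  (forall i, (1 <= i <= T)%N -> 1 - a r * u i != 0) ->
  PhiM M T u (qshift q r a) =
  PhiM M T u a * \prod_(1 <= i < T.+1) ((1 - q * a r * u i) / (1 - a r * u i)).
Proof.
move=> hr hden; rewrite /PhiM -big_split /=; apply: eq_big_nat => i hi.
apply: (prodr_nat_update (r := r)); first by lia.
  by move=> j /qshift_ne ->.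
by rewrite qshift_at [RHS]mulrC divfK ?hden.
Qed.

Lemma Fstoch_qshift T kappa (u a nu : nat -> R) r : (1 <= r)%N ->
  (forall i, (i < T)%N -> (r < kappa i.+1)%N) ->
  (forall i, (1 <= i <= T)%N -> 1 - a r * u i != 0 /\ 1 - q * a r * u i != 0) ->
  Fstoch q T kappa u (qshift q r a) (qshift q r nu) =
  q ^+ T * \prod_(1 <= i < T.+1) ((1 - a r * u i) / (1 - q * a r * u i)) *
  Fstoch q T kappa u a nu.
Proof.
move=> hr hk hden.
set H := \prod_(1 <= i < T.+1) _.
have hpre K : \prod_(1 <= r' < K)
    (qpoch q (qshift q r nu r') (mult T kappa r') / qpoch q q (mult T kappa r')) =
  \prod_(1 <= r' < K) (qpoch q (nu r') (mult T kappa r') / qpoch q q (mult T kappa r')).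
  apply: eq_big_nat => r' _; have [->|/qshift_ne -> //] := eqVneq r' r.
  by rewrite mult_eq0 => [|i /hk /gtn_eqF ->]; first rewrite /qpoch !big_ord0.
have hterm (s : 'S_T) :
  \prod_(i < T) ((1 - q) / (1 - qshift q r a (kappa i.+1) * u (s i).+1) *
     \prod_(1 <= j < kappa i.+1) ((qshift q r nu j - qshift q r a j * u (s i).+1) /
                                  (1 - qshift q r a j * u (s i).+1))) =
  \prod_(i < T) ((1 - q) / (1 - a (kappa i.+1) * u (s i).+1) *
     \prod_(1 <= j < kappa i.+1) ((nu j - a j * u (s i).+1) / (1 - a j * u (s i).+1))) *
  (q ^+ T * H).
  have -> : q ^+ T * H =
      \prod_(i < T) (q * ((1 - a r * u (s i).+1) / (1 - q * a r * u (s i).+1))).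
    rewrite big_split /= prodr_const card_ord /H big_add1 big_mkord; congr (_ * _).
    exact: (reindex_inj (@perm_inj _ s)).
  rewrite -big_split; apply: eq_bigr => i _ /=.
  have [hd1 hd2] : 1 - a r * u (s i).+1 != 0 /\ 1 - q * a r * u (s i).+1 != 0.
    by apply: hden; rewrite ltn_ord.
  have hki := hk i (ltn_ord i).
  rewrite qshift_ne ?gtn_eqF // -[RHS]mulrA; congr (_ * _).
  apply: (prodr_nat_update (r := r)); first by lia.
    by move=> j hj; rewrite !qshift_ne.
  by rewrite !qshift_at; field; rewrite hd1 hd2.
rewrite /Fstoch hpre [RHS]mulrCA; congr (_ * _).
rewrite mulr_sumr; apply: eq_bigr => s _ /=.
by rewrite hterm mulrA mulrC.
Qed.

Lemma Ftilde_qshift M T kappa (u a nu : nat -> R) r :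
  0 < q -> (forall i, (1 <= i)%N -> u i < 0) -> 0 < a r -> (1 <= r <= M)%N ->
  (forall i, (i < T)%N -> (r < kappa i.+1)%N) ->
  Ftilde q M T kappa u (qshift q r a) (qshift q r nu) =
  q ^+ T * Ftilde q M T kappa u a nu.
Proof.
move=> hq hu har hr hk.
have hden i : (1 <= i <= T)%N -> 1 - a r * u i != 0 /\ 1 - q * a r * u i != 0.
  move=> /andP[hi _]; have hui := hu i hi.
  have h1 : a r * u i < 0 by rewrite pmulr_rlt0.
  have h2 : q * a r * u i < 0 by rewrite pmulr_rlt0 ?mulr_gt0.
  by split; apply: lt0r_neq0; rewrite subr_gt0 (lt_trans _ ltr01).
rewrite /Ftilde PhiM_qshift => [|//|i /hden[]//].
rewrite Fstoch_qshift //; last by case/andP: hr.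
set W := \prod_(1 <= i < T.+1) _; set H := \prod_(1 <= i < T.+1) _.
have WH : W * H = 1.
  rewrite /W /H -big_split big1_seq // => i.
  rewrite mem_index_iota => /andP[_ /hden[hd1 hd2]] /=.
  by field; rewrite hd1 hd2.
transitivity (q ^+ T * (PhiM M T u a * Fstoch q T kappa u a nu) * (W * H)).
  by ring.
by rewrite WH mulr1.
Qed.
End FtildeQshift.

Lemma sorted_geq_bounded (s : seq nat) N :
  sorted geq s -> (head 0 s <= N)%N -> all (fun n => n <= N)%N s.
Proof.
case: s => [//|n s] /= hs hn; rewrite hn /=.
apply/allP => m /(allP (order_path_min (fun _ _ _ h1 h2 => leq_trans h2 h1) hs)).
by move/leq_trans; apply.
Qed.

Theorem lemma4p5 (R : realFieldType) (q : R) (u a nu : nat -> R)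
  (hq : 0 < q < 1)
  (hu : forall i, (1 <= i)%N -> u i < 0)
  (ha : forall i, (1 <= i)%N -> 0 < a i)
  (hnu : forall i, (1 <= i)%N -> 0 < nu i < 1)
  (hbdd : exists eps : R, 0 < eps /\
     forall i, (1 <= i)%N ->
       eps <= a i <= eps^-1 /\ eps <= nu i <= 1 - eps)
  (hac : forall i j, (1 <= i)%N -> (1 <= j)%N -> a i * (nu j / a j) < 1)
  (N : nat) (hN : (1 <= N)%N)
  (hdist : forall i j, (1 <= i <= N)%N -> (1 <= j <= N)%N -> i <> j ->
     a i <> a j)
  (T : nat) (hT : (1 <= T)%N) (kappa : nat -> nat)
  (hkappa : partitionT T kappa) (hkN : (N < kappa T)%N)
  (M : nat) (hM : (N <= M)%N) :
  Dop q N (Ftilde q M T kappa u) a nu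
    = q ^+ T * (1 - \prod_(1 <= r < N.+1) nu r) * Ftilde q M T kappa u a nu
  /\
  forall Ns : seq nat,
    (1 <= size Ns)%N ->
    sorted geq Ns ->
    all (fun n => 1 <= n)%N Ns ->
    (head 0 Ns <= N)%N ->
    Diter q Ns (Ftilde q M T kappa u) a nu
      = q ^+ (size Ns * T) * Ftilde q M T kappa u a nu
        * Diter q Ns (fun _ _ => 1) a nu.
Proof.
have hq0 : 0 < q by case/andP: hq.
have hk i : (i < T)%N -> (N < kappa i.+1)%N.
  by move=> hi; apply: leq_trans hkN (partitionT_ge_last hkappa _).
pose Pos (a' _ : nat -> R) := forall j, (1 <= j)%N -> 0 < a' j.
have hPos r a' nu' :
    (1 <= r <= N)%N -> Pos a' nu' -> Pos (qshift q r a') (qshift q r nu').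
  move=> _ Pa j hj; rewrite /qshift; case: eqP => _; last exact: Pa.
  by rewrite mulr_gt0 ?Pa.
have hF r a' nu' : (1 <= r <= N)%N -> Pos a' nu' ->
    Ftilde q M T kappa u (qshift q r a') (qshift q r nu') =
    q ^+ T * Ftilde q M T kappa u a' nu'.
  move=> /andP[hr hrN] Pa; apply: Ftilde_qshift => //; first exact: Pa.
  - by rewrite hr (leq_trans hrN).
  - by move=> i /hk; apply: leq_ltn_trans.
have hD := Diter_qshift_eigen hPos hF.
split.
- have ainj : {in [pred i | 1 <= i <= N]%N &, injective a}.
    move=> i j hi hj haij; case: (eqVneq i j) => // /eqP hij.
    by case: (hdist i j hi hj hij haij).
  have ha0 i : (1 <= i <= N)%N -> a i != 0 by case/andP => /ha /lt0r_neq0.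
  have := hD [:: N] _ a nu ha; rewrite /= leqnn expr1 Dop_const1 // => -> //.
  by rewrite mulrAC.
- move=> Ns _ hs _ hh.
  have hNs := sorted_geq_bounded hs hh.
  by rewrite hD // -exprM mulnC.
Qed.
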